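(* For $n\ge 6$ consider partitions of $n$ with parts $q_1\ge q_2\ge\dots\ge q_h$ such that $h\ge 3$, $q_j-q_{j+1}\in\{0,1\}$ for all $1\le j<h$, $q_1=q_2$, and $q_{h-1}=q_h=3$. Let $e''(n)$ (resp. $o''(n)$) be the number of such partitions with an even (resp. odd) number $h$ of parts. For an integer $t$ put $P_1(t)=\tfrac12(3t^2+t+4)$, $P_2(t)=\tfrac12(3(t+1)^2-t-1)$, $P_3(t)=\tfrac12(3(t+1)^2-t+3)$, $P_4(t)=\tfrac12(3(t+1)^2+t+1)$. Then for every integer $n\ge 6$: (a) $e''(n)=o''(n)$ if $n\notin\{P_1(t),P_2(t),P_3(t),P_4(t)\}$ for every integer $t\ge 2$; (b) $e''(n)=o''(n)-1$ if $n=P_1(t)$ or $n=P_4(t)$ for some integer $t\ge 2$; (c) $e''(n)=o''(n)+1$ if $n=P_2(t)$ or $n=P_3(t)$ for some integer $t\ge 2$. *)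

From mathcomp Require Import all_boot.
Set Implicit Arguments. Unset Strict Implicit. Unset Printing Implicit Defensive.

Definition good_partition (n : nat) (s : seq nat) : bool :=
  [&& sumn s == n,
      all (fun a => 0 < a) s,
      3 <= size s,
      sorted (fun a b => (b <= a) && (a <= b.+1)) s,
      nth 0 s 0 == nth 0 s 1,
      nth 0 s (size s - 2) == 3
    & last 0 s == 3].

Fixpoint seqs_len (k m : nat) : seq (seq nat) :=
  match k with
  | 0 => [:: [::]]
  | k'.+1 => [seq a :: s | a <- iota 1 m, s <- seqs_len k' m]
  end.

(* All sequences of length <= n with entries in {1, ..., n}: this contains
   every partition of n (each part is <= n and there are <= n parts),
   without repetitions. *)
Definition cand_seqs (n : nat) : seq (seq nat) :=
  flatten [seq seqs_len k n | k <- iota 0 n.+1].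

Definition e2 (n : nat) : nat :=
  count (fun s => good_partition n s && ~~ odd (size s)) (cand_seqs n).
Definition o2 (n : nat) : nat :=
  count (fun s => good_partition n s && odd (size s)) (cand_seqs n).

(* The four quadratic polynomials (all numerators are even for t >= 0). *)
Definition P1 (t : nat) : nat := (3 * t ^ 2 + t + 4) %/ 2.
Definition P2 (t : nat) : nat := (3 * (t + 1) ^ 2 - t - 1) %/ 2.
Definition P3 (t : nat) : nat := (3 * (t + 1) ^ 2 - t + 3) %/ 2.
Definition P4 (t : nat) : nat := (3 * (t + 1) ^ 2 + t + 1) %/ 2.

From Stdlib Require Import ZArith Lia.
From mathcomp Require Import all_boot zify.

(* Read from its smallest part, a counted partition is 3 followed by a "ladder"
   from 3: a sequence that starts at 3, grows by steps 0 or 1 and ends with two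
   equal entries.  Splitting off the first entry shows that the ladders from b of
   weight 2b + n, counted with sign (-1)^length, are counted by the coefficient
   g_{2,b}(n) of q^n in the power series G_{a,b} defined by
   G_{a,b} = 1 - q^b G_{a,b} - q^(a+b) G_{a,b+1}.  These series satisfy
   G_{a,b} = 1 - (q^b + q^(a+b)) G_{a+1,b}, hence
   G_{a,a} = 1 - q^a + q^(3a+1) G_{a+1,a+1}, so the coefficients of G_{a,a} are
   +1 and -1 on two interleaved quadratic sequences of exponents and 0 elsewhere.
   Therefore e''(n) - o''(n) = g_{3,3}(n - 12) + g_{3,3}(n - 14) - [n = 9], and the
   nonzero terms occur exactly at the values of the P_i. *)

Lemma mem_seqs_len k m s :
  (s \in seqs_len k m) = (size s == k) && all (fun x => 0 < x <= m) s.
Proof.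
elim: k s => [|k IH] [|a s] //=.
  by apply/allpairsP => -[[x r] []].
apply/allpairsP/andP => [[[x r] [/= + + [-> ->]]]|[/eqP [sk] /andP [am sm]]].
  by rewrite mem_iota => xm /[!IH] /andP [/eqP <- ->]; rewrite andbT; split=> //; lia.
by exists (a, s); rewrite /= mem_iota IH sk eqxx sm; split=> //; lia.
Qed.

Lemma seqs_len_uniq k m : uniq (seqs_len k m).
Proof.
elim: k => [|k IH] //=; apply: allpairs_uniq => [||[x r] [y t] _ _ [-> ->]] //.
exact: iota_uniq.
Qed.

Lemma mem_cand_seqs n s :
  (s \in cand_seqs n) = (size s <= n) && all (fun x => 0 < x <= n) s.
Proof.
apply/flattenP/andP => [[_ /mapP [k + ->]]|[sn sp]].
  by rewrite mem_iota mem_seqs_len => kn /andP [/eqP sk ->]; split=> //; lia.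
exists (seqs_len (size s) n); last by rewrite mem_seqs_len eqxx.
by apply/mapP; exists (size s); rewrite // mem_iota; lia.
Qed.

Lemma cand_seqs_uniq n : uniq (cand_seqs n).
Proof.
rewrite /cand_seqs; elim: (n.+1) 0 => [|len IH] lo //=.
rewrite cat_uniq seqs_len_uniq IH andbT; apply/hasPn => s /flattenP [_ /mapP [k + ->]].
by rewrite mem_iota !mem_seqs_len => kn /andP [/eqP -> _]; apply/negP => /andP [/eqP]; lia.
Qed.

Lemma size_le_sumn s : all (leq 1) s -> size s <= sumn s.
Proof. by elim: s => //= x s IH /andP [x1 /IH]; lia. Qed.

Lemma mem_le_sumn s x : x \in s -> x <= sumn s.
Proof. by elim: s => //= y s IH; rewrite inE => /predU1P [->|/IH]; lia. Qed.

Lemma partition_in_cand_seqs n s : all (leq 1) s -> sumn s = n -> s \in cand_seqs n.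
Proof.
move=> s_pos <-; rewrite mem_cand_seqs size_le_sumn //=.
by apply/allP => x xs; rewrite mem_le_sumn // andbT; apply: (allP s_pos).
Qed.

(** * Ladders *)

Definition unit_step : rel nat := fun x y => x <= y <= x.+1.

Definition ladder (b : nat) (r : seq nat) : bool :=
  [&& head 0 r == b, 1 < size r, sorted unit_step r & nth 0 r (size r).-2 == last 0 r].

Lemma unit_stepE x y : unit_step x y = (y == x) || (y == x.+1).
Proof. by rewrite /unit_step; lia. Qed.

Lemma ladder_cons b x r :
  ladder b (x :: r) = (x == b) && [|| r == [:: b], ladder b r | ladder b.+1 r].
Proof.
rewrite /ladder; case: r => [|y [|z t]] /=; rewrite ?andbF //.
  case: (x =P b) => //= ->; rewrite unit_stepE eqseq_cons andbT.
  by case: (y =P b) => [->|/eqP/negbTE yb]; rewrite ?eqxx //= andbC eq_sym yb.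
case: (x =P b) => //= ->; rewrite unit_stepE eqseq_cons andbF /=.
by move: (y == b) (y == b.+1) (unit_step y z) (path _ z t) (_ == last z t) => [] [] [] [] [].
Qed.

Fixpoint ladders (f b m : nat) : seq (seq nat) :=
  if f is f'.+1 then
    if b <= m then
      [seq b :: r | r <- nseq (m - b == b) [:: b] ++ ladders f' b (m - b)
                                                  ++ ladders f' b.+1 (m - b)]
    else [::]
  else [::].

Lemma mem_map_cons (b x : nat) r (L : seq (seq nat)) :
  (x :: r \in [seq b :: r | r <- L]) = (x == b) && (r \in L).
Proof.
apply/mapP/andP => [[r' rL [-> ->]]|[/eqP -> rL]]; first by rewrite eqxx.
by exists r.
Qed.

Lemma mem_ladders f b m r : 0 < b -> m < f ->
  (r \in ladders f b m) = ladder b r && (sumn r == m).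
Proof.
elim: f b m r => [|f IH] b m [|x r] b0 mf //=.
  by rewrite /ladder andbF; case: ifP => // _; apply/negbTE/mapP => -[].
rewrite ladder_cons; case: leqP => bm; last first.
  by case: (x =P b) => //= ->; rewrite in_nil (_ : b + sumn r == m = false) ?andbF //; lia.
rewrite mem_map_cons !mem_cat mem_nseq !IH //; try lia.
case: (x =P b) => //= ->; rewrite (_ : (b + sumn r == m) = (sumn r == m - b)); last by lia.
case: (r =P [:: b]) => [->|_] /=; last by rewrite andbF andb_orl.
by rewrite /ladder /= !andbF andbT !orbF addn0 lt0b eq_sym.
Qed.

Lemma ladders_uniq f b m : 0 < b -> m < f -> uniq (ladders f b m).
Proof.
elim: f b m => [|f IH] b m b0 mf //=; case: leqP => // bm.
rewrite map_inj_uniq; last by move=> r1 r2 [].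
rewrite !cat_uniq !IH //; try lia.
rewrite andbT; apply/and4P; split=> //; first by case: (m - b == b).
  apply/hasPn => r; rewrite mem_cat !mem_ladders; try lia.
  move=> /orP [] /andP [/and4P [_ sz _ _] _]; rewrite mem_nseq;
    by case: (r =P [:: b]) sz => [->|]; rewrite ?andbF.
apply/hasPn => r; rewrite !mem_ladders; try lia.
move=> /andP [/and4P [/eqP hr _ _ _] _].
by apply/negP => /andP [/and4P [/eqP hr' _ _ _] _]; lia.
Qed.

Lemma ladders_fuel f f' b m : 0 < b -> m < f -> m < f' -> ladders f b m = ladders f' b m.
Proof.
elim: f f' b m => [|f IH] [|f'] b m b0 mf mf' //=.
by case: leqP => // bm; rewrite (IH f') ?(IH f') //; lia.
Qed.

Lemma path_unit_step_ge x r : path unit_step x r -> all (leq x) r.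
Proof.
move=> xr; apply: (order_path_min leq_trans).
by apply: sub_path xr => y z /andP [].
Qed.

Lemma good_partition_rev n x r :
  good_partition n (rev (x :: r)) = [&& x == 3, ladder 3 r & x + sumn r == n].
Proof.
rewrite /good_partition sumn_rev all_rev size_rev rev_sorted /ladder.
case: r => [|y [|z t]]; rewrite ?andbF //.
rewrite -nth_last size_rev !nth_rev //= subnn (_ : _ - _.+1 = 1) /=; last by lia.
have -> : nth 0 (z :: t) (size t) = last z t by rewrite -[size t]/(size (z :: t)).-1 nth_last.
rewrite -/(unit_step x y) -/(unit_step y z) -[path _ z t]/(path unit_step z t).
rewrite [last z t == _]eq_sym.
case: (x =P 3) => [->|]; last by rewrite !andbF.
case: (y =P 3) => [->|]; last by rewrite !andbF.
case: (leqP 3 z) => z3; last by rewrite [unit_step 3 z]/unit_step (leqNgt 3 z) z3 !andbF.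
have [zt|] := boolP (path unit_step z t); last by rewrite !andbF.
rewrite (sub_all _ (path_unit_step_ge _ _ zt)); last by move=> w /=; lia.
have -> : 0 < z by lia.
by rewrite /= !andbT andbC.
Qed.

Lemma good_partitionE n s : 3 <= n ->
  good_partition n s = (s \in [seq rev (3 :: r) | r <- ladders (n - 3).+1 3 (n - 3)]).
Proof.
move=> n3; rewrite -[s]revK; case: (rev s) => [|x r].
  have -> : good_partition n (rev [::]) = false by rewrite /good_partition /= !andbF.
  by apply/esym/negbTE/mapP => -[r _ /(congr1 size)]; rewrite !size_rev.
rewrite good_partition_rev.
apply/and3P/mapP => [[/eqP -> lr /eqP sr]|[r' + /(can_inj revK) [-> ->]]].
  by exists r; rewrite // mem_ladders ?lr //=; lia.
by rewrite mem_ladders // => /andP [lr /eqP sr]; split=> //; lia.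
Qed.

Lemma count_good_partitions n (p : pred nat) : 3 <= n ->
  count (fun s => good_partition n s && p (size s)) (cand_seqs n) =
  count (fun r => p (size r).+1) (ladders (n - 3).+1 3 (n - 3)).
Proof.
move=> n3; set L := ladders _ _ _.
have perm : perm_eq (filter (good_partition n) (cand_seqs n)) [seq rev (3 :: r) | r <- L].
  apply: uniq_perm; first exact: filter_uniq (cand_seqs_uniq n).
    by rewrite map_inj_uniq ?ladders_uniq // => r1 r2 /(can_inj revK) [].
  move=> s; rewrite mem_filter -good_partitionE // andb_idr // => good_s.
  by case/and3P: good_s => /eqP sn s_pos _; apply: partition_in_cand_seqs.
have -> : count (fun s => good_partition n s && p (size s)) (cand_seqs n) =
          count (p \o size) (filter (good_partition n) (cand_seqs n)).
  by rewrite count_filter; apply: eq_count => s; rewrite /= andbC.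
by rewrite (permP perm) count_map; apply: eq_count => r /=; rewrite size_rev.
Qed.

Lemma double_half_even m : ~~ odd m -> 2 * (m %/ 2) = m.
Proof. by move=> m_even; rewrite mulnC divnK // dvdn2. Qed.

Lemma P1_double t : 2 * P1 t = 3 * t ^ 2 + t + 4.
Proof. by rewrite double_half_even // !oddD !oddM; case: (odd t). Qed.

Lemma P2_double t : 2 * P2 t = 3 * t ^ 2 + 5 * t + 2.
Proof.
rewrite /P2 (_ : _ - t - 1 = 3 * t ^ 2 + 5 * t + 2); last by lia.
by rewrite double_half_even // !oddD !oddM; case: (odd t).
Qed.

Lemma P3_double t : 2 * P3 t = 3 * t ^ 2 + 5 * t + 6.
Proof.
rewrite /P3 (_ : _ - t + 3 = 3 * t ^ 2 + 5 * t + 6); last by lia.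
by rewrite double_half_even // !oddD !oddM; case: (odd t).
Qed.

Lemma P4_double t : 2 * P4 t = 3 * t ^ 2 + 7 * t + 4.
Proof.
rewrite /P4 (_ : _ + t + 1 = 3 * t ^ 2 + 7 * t + 4); last by lia.
by rewrite double_half_even // !oddD !oddM; case: (odd t).
Qed.

(** * The series G_{a,b} *)

Section Coefficients.
Local Open Scope Z_scope.
Local Coercion Z.of_nat : nat >-> Z.

Lemma Z_lt_ind_neg (P : Z -> Prop) :
  (forall n, n < 0 -> P n) -> (forall n, (forall m, m < n -> P m) -> P n) ->
  forall n, P n.
Proof.
move=> Pneg Pstep n; case: (Z.ltb_spec n 0) => [/Pneg //|].
apply: Z_lt_induction => {}n IH; apply: Pstep => m ltmn.
by case: (Z.ltb_spec m 0) => [/Pneg //|m0]; apply: IH; lia.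
Qed.

Definition delta (n : Z) : Z := if n =? 0 then 1 else 0.

Lemma delta0 : delta 0 = 1. Proof. by []. Qed.

Lemma delta_neq0 n : n <> 0 -> delta n = 0.
Proof. by rewrite /delta; case: (Z.eqb_spec n 0). Qed.

(* [Gcoef a b n] is the coefficient of q^n in the power series G_{a,b}
   determined by G_{a,b} = 1 - q^b G_{a,b} - q^(a+b) G_{a,b+1} (and 0 for n < 0). *)
Fixpoint Gcoef_fuel (f a b : nat) (n : Z) : Z :=
  if f is f'.+1 then
    if n <? 0 then 0
    else delta n - Gcoef_fuel f' a b (n - b) - Gcoef_fuel f' a b.+1 (n - a - b)
  else 0.

Definition Gcoef (a b : nat) (n : Z) : Z := Gcoef_fuel (Z.to_nat n).+1 a b n.

Lemma Gcoef_fuel_neg (f a b : nat) (n : Z) : n < 0 -> Gcoef_fuel f a b n = 0.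
Proof. by case: f => //= f /Z.ltb_lt ->. Qed.

Lemma Gcoef_neg (a b : nat) (n : Z) : n < 0 -> Gcoef a b n = 0.
Proof. exact: Gcoef_fuel_neg. Qed.

Lemma Gcoef_fuel_irr (f f' a b : nat) (n : Z) : (0 < b)%N -> n < f -> n < f' ->
  Gcoef_fuel f a b n = Gcoef_fuel f' a b n.
Proof.
elim: f f' n b => [|f IH] f' n b b0 nf nf'; first by rewrite !Gcoef_fuel_neg //; lia.
case: f' nf' => [|f'] nf'; first by rewrite !Gcoef_fuel_neg //; lia.
rewrite /=; case: (Z.ltb_spec n 0) => // n0.
by rewrite (IH f') ?(IH f') //; lia.
Qed.

Lemma Gcoef_fuel_enough (f a b : nat) (n : Z) : (0 < b)%N -> n < f ->
  Gcoef_fuel f a b n = Gcoef a b n.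
Proof. by move=> b0 nf; apply: Gcoef_fuel_irr => //; lia. Qed.

(* The shifted arguments are hypotheses so that [lia] can match them syntactically. *)
Lemma Gcoef_rec (a b : nat) (n n1 n2 : Z) : (0 < b)%N -> n1 = n - b -> n2 = n - a - b ->
  Gcoef a b n = delta n - Gcoef a b n1 - Gcoef a b.+1 n2.
Proof.
move=> b0 -> ->; case: (Z.ltb_spec n 0) => n0.
  by rewrite !Gcoef_neg ?delta_neq0 //; lia.
rewrite {1}/Gcoef /=; case: (Z.ltb_spec n 0) => [|_]; first lia.
by rewrite !Gcoef_fuel_enough //; lia.
Qed.

Lemma Gcoef_split (a b : nat) (n n1 n2 : Z) : (0 < b)%N -> n1 = n - b -> n2 = n - a - b ->
  Gcoef a b n + Gcoef a.+1 b n1 + Gcoef a.+1 b n2 = delta n.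
Proof.
elim/Z_lt_ind_neg: n b n1 n2 => [n n0|n IH] b n1 n2 b0 -> ->.
  by rewrite !Gcoef_neg ?delta_neq0 //; lia.
(* Expand all three terms once; the induction hypothesis at n - b and at n - a - b
   (for b + 1) cancels what remains. *)
rewrite (Gcoef_rec a b n (n - b) (n - a - b)) //.
rewrite (Gcoef_rec a.+1 b (n - b) (n - b - b) (n - a - b - b - 1)) //; try lia.
rewrite (Gcoef_rec a.+1 b (n - a - b) (n - a - b - b) (n - a - a - b - b - 1)) //; try lia.
have := IH (n - b) ltac:(lia) b (n - b - b) (n - a - b - b) b0 ltac:(lia) ltac:(lia).
have := IH (n - a - b) ltac:(lia) b.+1 (n - a - b - b - 1) (n - a - a - b - b - 1) isT
  ltac:(lia) ltac:(lia).
lia.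
Qed.

Lemma Gcoef_diag (a : nat) (n n1 n2 : Z) : (0 < a)%N -> n1 = n - a -> n2 = n - 3 * a - 1 ->
  Gcoef a a n = delta n - delta n1 + Gcoef a.+1 a.+1 n2.
Proof.
move=> a0; elim/Z_lt_ind_neg: n n1 n2 => [n n0|n IH] n1 n2 -> ->.
  by rewrite !Gcoef_neg ?delta_neq0 //; lia.
rewrite (Gcoef_rec a a n (n - a) (n - a - a)) //.
have := Gcoef_split a a.+1 (n - a - a) (n - 3 * a - 1) (n - 4 * a - 1) isT ltac:(lia) ltac:(lia).
have := IH (n - a) ltac:(lia) (n - a - a) (n - 4 * a - 1) ltac:(lia) ltac:(lia).
lia.
Qed.

Fixpoint diag_node (k a : nat) : nat :=
  if k is k'.+1 then (3 * a + 1 + diag_node k' a.+1)%N else 0%N.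

Lemma diag_node_double (k a : nat) : (2 * diag_node k a + k = 3 * k * (2 * a + k))%N.
Proof. by elim: k a => [|k IH] a //=; have := IH a.+1; lia. Qed.

Definition diag_support (a : nat) (x : Z) : Prop :=
  exists k : nat, x = diag_node k a \/ x = diag_node k a + a + k.

Lemma Gcoef_diag_plus (a k : nat) : (0 < a)%N -> Gcoef a a (diag_node k a) = 1.
Proof.
elim: k a => [|k IH] a a0 /=.
  rewrite (Gcoef_diag a 0 (- a) (- 3 * a - 1)); try lia.
  by rewrite delta0 delta_neq0 ?Gcoef_neg //; lia.
rewrite (Gcoef_diag a _ (2 * a + 1 + diag_node k a.+1) (diag_node k a.+1)) //; try lia.
by rewrite !delta_neq0 ?IH //; lia.
Qed.

Lemma Gcoef_diag_minus (a k : nat) : (0 < a)%N -> Gcoef a a (diag_node k a + a + k) = -1.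
Proof.
elim: k a => [|k IH] a a0 /=.
  rewrite (Gcoef_diag a _ 0 (- 2 * a - 1)); try lia.
  by rewrite delta0 delta_neq0 ?Gcoef_neg //; lia.
rewrite (Gcoef_diag a _ (3 * a + 1 + diag_node k a.+1 + k.+1)
                        (diag_node k a.+1 + a.+1 + k)) //; try lia.
by rewrite !delta_neq0 ?IH //; lia.
Qed.

Lemma Gcoef_diag_zero (a : nat) (x : Z) : (0 < a)%N -> ~ diag_support a x -> Gcoef a a x = 0.
Proof.
elim/Z_lt_ind_neg: x a => [x x0|x IH] a a0 xoff; first exact: Gcoef_neg.
have [x_ne0 x_nea] : x <> 0 /\ x <> a by split=> e; apply: xoff; exists 0%N => /=; lia.
rewrite (Gcoef_diag a x (x - a) (x - 3 * a - 1)) // !delta_neq0 ?IH //; try lia.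
by move=> [k sk]; apply: xoff; exists k.+1 => /=; lia.
Qed.

Lemma diag_support3_sep x y : diag_support 3 x -> diag_support 3 y -> y - x <> 2.
Proof.
move=> [j xj] [k yk]; move: xj yk (diag_node_double j 3) (diag_node_double k 3).
case: (ltngtP k j) => [kj|jk|->]; try have := leq_mul kj kj; try have := leq_mul jk jk; lia.
Qed.

Definition parity_balance (L : seq (seq nat)) : Z :=
  count (fun r => ~~ odd (size r)) L - count (fun r => odd (size r)) L.

Lemma parity_balance_cat L1 L2 :
  parity_balance (L1 ++ L2) = parity_balance L1 + parity_balance L2.
Proof. by rewrite /parity_balance !count_cat; lia. Qed.

Lemma parity_balance_cons b L : parity_balance [seq b :: r | r <- L] = - parity_balance L.
Proof.
rewrite /parity_balance !count_map.
have -> : count (preim (cons b) (fun r => ~~ odd (size r))) L = count (fun r => odd (size r)) L.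
  by apply: eq_count => r /=; rewrite negbK.
have -> : count (preim (cons b) (fun r => odd (size r))) L = count (fun r => ~~ odd (size r)) L.
  by [].
lia.
Qed.

Lemma parity_balance_singletons k b : parity_balance (nseq k [:: b]) = - k.
Proof. by rewrite /parity_balance !count_nseq /=; lia. Qed.

Definition ladder_balance (b m : nat) : Z := parity_balance (ladders m.+1 b m).

Lemma ladder_balance_rec b m : (0 < b)%N -> (b <= m)%N ->
  ladder_balance b m = delta (m - 2 * b) - ladder_balance b (m - b) - ladder_balance b.+1 (m - b).
Proof.
move=> b0 bm; rewrite {1}/ladder_balance [ladders m.+1 b m]/= bm.
rewrite parity_balance_cons !parity_balance_cat parity_balance_singletons.
rewrite (ladders_fuel m (m - b).+1) ?(ladders_fuel m (m - b).+1 b.+1) //; try lia.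
rewrite -/(ladder_balance b (m - b)) -/(ladder_balance b.+1 (m - b)).
by case: eqP => [e|ne]; [rewrite (_ : m - 2 * b = 0) ?delta0 | rewrite delta_neq0]; lia.
Qed.

Lemma ladder_balance_Gcoef b m : (0 < b)%N -> ladder_balance b m = Gcoef 2 b (m - 2 * b).
Proof.
elim/ltn_ind: m b => m IH b b0; case: (leqP b m) => bm; last first.
  by rewrite Gcoef_neg; [rewrite /ladder_balance /= leqNgt bm | lia].
rewrite ladder_balance_rec // !IH //; try lia.
by rewrite (Gcoef_rec 2 b (m - 2 * b) ((m - b)%N - 2 * b) ((m - b)%N - 2 * b.+1)) //; lia.
Qed.

Definition balance (n : Z) : Z := Gcoef 3 3 (n - 12) + Gcoef 3 3 (n - 14) - delta (n - 9).

Lemma e2_sub_o2 n : (6 <= n)%N -> e2 n - o2 n = balance n.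
Proof.
move=> n6; rewrite /e2 /o2.
rewrite (count_good_partitions _ (fun k => ~~ odd k)) ?(count_good_partitions _ odd); try lia.
have := ladder_balance_Gcoef 3 (n - 3) isT.
rewrite (_ : (n - 3)%N - 2 * 3%N = n - 9); last by lia.
have := Gcoef_split 2 3 (n - 9) (n - 12) (n - 14) isT ltac:(lia) ltac:(lia).
rewrite /ladder_balance /parity_balance /balance; set L := ladders _ _ _.
rewrite (eq_count (a1 := fun r => ~~ odd (size r).+1) (a2 := fun r => odd (size r))) => [|r].
  by rewrite -[count (fun r => odd (size r).+1) L]/(count (fun r => ~~ odd (size r)) L); lia.
by rewrite /= negbK.
Qed.

Lemma P2_sub12 k : P2 k.+2 - 12 = diag_node k 3.
Proof. by have := P2_double k.+2; have := diag_node_double k 3; lia. Qed.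

Lemma P4_sub12 k : P4 k.+2 - 12 = diag_node k 3 + 3 + k.
Proof. by have := P4_double k.+2; have := diag_node_double k 3; lia. Qed.

Lemma P3_sub14 k : P3 k.+2 - 14 = diag_node k 3.
Proof. by have := P3_double k.+2; have := diag_node_double k 3; lia. Qed.

Lemma P1_sub14 k : P1 k.+3 - 14 = diag_node k 3 + 3 + k.
Proof. by have := P1_double k.+3; have := diag_node_double k 3; lia. Qed.

Lemma balance_at12 n : diag_support 3 (n - 12) -> n <> 9 -> balance n = Gcoef 3 3 (n - 12).
Proof.
move=> s12 n9; rewrite /balance delta_neq0 ?(Gcoef_diag_zero 3 (n - 14)) //; try lia.
by move=> s14; apply: (diag_support3_sep _ _ s14 s12); lia.
Qed.

Lemma balance_at14 n : diag_support 3 (n - 14) -> n <> 9 -> balance n = Gcoef 3 3 (n - 14).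
Proof.
move=> s14 n9; rewrite /balance delta_neq0 ?(Gcoef_diag_zero 3 (n - 12)) //; try lia.
by move=> s12; apply: (diag_support3_sep _ _ s14 s12); lia.
Qed.

Lemma balance_off (n : nat) :
  (forall t, (2 <= t)%N -> [/\ n <> P1 t, n <> P2 t, n <> P3 t & n <> P4 t]) -> balance n = 0.
Proof.
move=> off; have [nP1 _ _ _] := off 2%N isT.
rewrite /balance delta_neq0 ?Gcoef_diag_zero //.
- move=> [k [e|e]]; [case: (off k.+2 isT) => _ _ + _; have := P3_sub14 k
                   | case: (off k.+3 isT) => + _ _ _; have := P1_sub14 k]; lia.
- move=> [k [e|e]]; [case: (off k.+2 isT) => _ + _ _; have := P2_sub12 k
                   | case: (off k.+2 isT) => _ _ _ +; have := P4_sub12 k]; lia.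
- by move: nP1; rewrite (_ : P1 2 = 9%N) //; lia.
Qed.

Lemma balance_minus (n : nat) :
  (exists t, (2 <= t)%N /\ (n = P1 t \/ n = P4 t)) -> balance n = -1.
Proof.
move=> [t [t2 [->|->]]].
  (* t = 2, i.e. n = 9, is settled by evaluation. *)
  case: t t2 => [|[|[|k]]] // _.
  rewrite balance_at14 ?P1_sub14 ?Gcoef_diag_minus //; last by have := P1_sub14 k; lia.
  by exists k; right.
case: t t2 => [|[|k]] // _.
rewrite balance_at12 ?P4_sub12 ?Gcoef_diag_minus //; last by have := P4_sub12 k; lia.
by exists k; right.
Qed.

Lemma balance_plus (n : nat) :
  (exists t, (2 <= t)%N /\ (n = P2 t \/ n = P3 t)) -> balance n = 1.
Proof.
move=> [[|[|k]] [//= _ [->|->]]].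
  rewrite balance_at12 ?P2_sub12 ?Gcoef_diag_plus //; last by have := P2_sub12 k; lia.
  by exists k; left.
rewrite balance_at14 ?P3_sub14 ?Gcoef_diag_plus //; last by have := P3_sub14 k; lia.
by exists k; left.
Qed.

End Coefficients.

Theorem corollary4p10 (n : nat) (hn : 6 <= n) :
  [/\ (forall t, 2 <= t -> [/\ n <> P1 t, n <> P2 t, n <> P3 t & n <> P4 t]) ->
        e2 n = o2 n,
      (exists t, 2 <= t /\ (n = P1 t \/ n = P4 t)) -> e2 n + 1 = o2 n
    & (exists t, 2 <= t /\ (n = P2 t \/ n = P3 t)) -> e2 n = o2 n + 1].
Proof.
have := e2_sub_o2 n hn.
by split=> [/balance_off|/balance_minus|/balance_plus]; lia.
Qed.
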